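(* Let $P$ be a finite set of points in the plane and let $G(P,S)$ be an increasing-chord geometric graph with vertex set $P$ and edge set $S$. Then every edge of the Gabriel graph of $P$ belongs to $S$.
   Context: The Gabriel graph of a point set $P$ is the geometric graph with vertex set $P$ having an edge $\overline{pq}$ between $p,q\in P$ if and only if the closed disk with diameter $\overline{pq}$ contains no point of $P\setminus\{p,q\}$ in its interior or on its boundary. A geometric path $(v_1,\dots,v_k)$ is self-approaching from $v_1$ to $v_k$ if for every three distinct points $a,b,c$ appearing in this order along the path (possibly interior to edges) $|\overline{bc}|<|\overline{ac}|$, where $|\cdot|$ is Euclidean length. A geometric graph (point set plus straight-line edges) is increasing-chord if for every pair of vertices $u,v$ it contains a path between them that is self-approaching both from $u$ to $v$ and from $v$ to $u$. *)

From Stdlib Require Import Reals List.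
Import ListNotations.
Open Scope R_scope.

Definition pt : Type := (R * R)%type.

Definition dist (a b : pt) : R :=
  sqrt ((fst a - fst b) ^ 2 + (snd a - snd b) ^ 2).

Definition midpoint (a b : pt) : pt :=
  ((fst a + fst b) / 2, (snd a + snd b) / 2).

Definition in_diam_disk (p q r : pt) : Prop :=
  dist r (midpoint p q) <= dist p q / 2.

Definition gabriel_edge (P : list pt) (p q : pt) : Prop :=
  In p P /\ In q P /\ p <> q /\
  forall r, In r P -> r <> p -> r <> q -> ~ in_diam_disk p q r.

(* A geometric graph with vertex set P and (undirected) edge set S:
   S is a relation on points; the edge {a,b} is present iff S a b \/ S b a. *)
Definition edge (S : pt -> pt -> Prop) (a b : pt) : Prop := S a b \/ S b a.

Fixpoint is_path (S : pt -> pt -> Prop) (vs : list pt) : Prop :=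
  match vs with
  | a :: ((b :: _) as tl) => edge S a b /\ is_path S tl
  | _ => True
  end.

(* Positions on the polyline (v_0, ..., v_{k-1}): (i, t) with i < k-1 and
   0 <= t <= 1 denotes the point (1-t) v_i + t v_{i+1}. *)
Definition valid_pos (vs : list pt) (s : nat * R) : Prop :=
  (S (fst s) < length vs)%nat /\ 0 <= snd s <= 1.

Definition pos_pt (vs : list pt) (s : nat * R) : pt :=
  let a := nth (fst s) vs (0, 0) in
  let b := nth (S (fst s)) vs (0, 0) in
  ((1 - snd s) * fst a + snd s * fst b, (1 - snd s) * snd a + snd s * snd b).

Definition pos_lt (s1 s2 : nat * R) : Prop :=
  (fst s1 < fst s2)%nat \/ (fst s1 = fst s2 /\ snd s1 < snd s2).

Definition self_approaching (vs : list pt) : Prop :=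
  forall s1 s2 s3,
    valid_pos vs s1 -> valid_pos vs s2 -> valid_pos vs s3 ->
    pos_lt s1 s2 -> pos_lt s2 s3 ->
    let a := pos_pt vs s1 in let b := pos_pt vs s2 in let c := pos_pt vs s3 in
    a <> b -> b <> c -> a <> c ->
    dist b c < dist a c.

Definition increasing_chord (P : list pt) (S : pt -> pt -> Prop) : Prop :=
  forall u v, In u P -> In v P ->
    exists vs : list pt,
      vs <> [] /\ hd (0, 0) vs = u /\ last vs (0, 0) = v /\
      is_path S vs /\ self_approaching vs /\ self_approaching (rev vs).

From Pilot Require Import Defs.
From Stdlib Require Import Reals List.
From Stdlib Require Import Lra Lia Psatz Classical.
Open Scope R_scope.

(* Take a path from p to q that is self-approaching from p to q, and let v be
   the vertex following the last copy of p in its initial run; pv is an edge.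
   Moving along pv towards v, the distance to q must strictly decrease right up
   to v, so the derivative condition at v gives (p - v).(q - v) <= 0: the angle
   pvq is not acute and v lies in the disk with diameter pq.  For a Gabriel
   edge pq this forces v = q. *)

Definition sqdist (a b : pt) : R := (fst a - fst b) ^ 2 + (snd a - snd b) ^ 2.

Definition mix (s : R) (a b : pt) : pt :=
  ((1 - s) * fst a + s * fst b, (1 - s) * snd a + s * snd b).

Definition dot_at (v p q : pt) : R :=
  (fst p - fst v) * (fst q - fst v) + (snd p - snd v) * (snd q - snd v).

Lemma sqdist_gt0 (a b : pt) : a <> b -> 0 < sqdist a b.
Proof.
  destruct a as [a1 a2], b as [b1 b2]; unfold sqdist; simpl; intros Hab.
  pose proof (pow2_ge_0 (a1 - b1)); pose proof (pow2_ge_0 (a2 - b2)).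
  destruct (Req_dec a1 b1) as [->|H1]; [destruct (Req_dec a2 b2) as [->|H2]|].
  - congruence.
  - assert (0 < Rsqr (a2 - b2)) by (apply Rsqr_pos_lt; lra). unfold Rsqr in *. nra.
  - assert (0 < Rsqr (a1 - b1)) by (apply Rsqr_pos_lt; lra). unfold Rsqr in *. nra.
Qed.

Lemma sqdist_lt_of_dist_lt (a b c : pt) : Defs.dist a c < Defs.dist b c -> sqdist a c < sqdist b c.
Proof. exact (sqrt_lt_0_alt _ _). Qed.

Lemma mix1 (a b : pt) : mix 1 a b = b.
Proof. destruct b; unfold mix; simpl; f_equal; ring. Qed.

Lemma mix_inj (s t : R) (a b : pt) : a <> b -> mix s a b = mix t a b -> s = t.
Proof.
  destruct a as [a1 a2], b as [b1 b2]; unfold mix; simpl; intros Hab E.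
  injection E as E1 E2.
  assert (F1 : (s - t) * (b1 - a1) = 0) by lra.
  assert (F2 : (s - t) * (b2 - a2) = 0) by lra.
  apply Rmult_integral in F1; apply Rmult_integral in F2.
  destruct F1, F2; try lra. exfalso; apply Hab; f_equal; lra.
Qed.

Lemma sqdist_mix_sub (s : R) (p v q : pt) :
  sqdist (mix s p v) q - sqdist v q = (1 - s) * ((1 - s) * sqdist p v - 2 * dot_at v p q).
Proof. unfold sqdist, mix, dot_at; simpl; ring. Qed.

Lemma dot_at_le0_of_approaching (p v q : pt) : p <> v ->
  (forall s, 0 <= s < 1 -> mix s p v <> q -> sqdist v q < sqdist (mix s p v) q) ->
  dot_at v p q <= 0.
Proof.
  intros Hpv Happ.
  apply Rnot_lt_le; intros Hc.
  set (c := dot_at v p q) in *.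
  set (D := sqdist p v).
  assert (HD : 0 < D) by exact (sqdist_gt0 _ _ Hpv).
  set (t := c / (c + D)).
  assert (Ht : 0 < t < 1) by (unfold t; split;
    [apply Rdiv_lt_0_compat | apply (Rmult_lt_reg_r (c + D)); [|field_simplify]]; lra).
  assert (HtD : t * D < c).
  { unfold t. apply (Rmult_lt_reg_r (c + D)); [lra|]. field_simplify; nra. }
  (* Points of pv within t of v are strictly closer to q than v is, so each is q. *)
  assert (Hhit : forall u, 0 < u <= t -> mix (1 - u) p v = q).
  { intros u Hu. apply NNPP; intros Hne.
    specialize (Happ (1 - u) ltac:(lra) Hne).
    pose proof (sqdist_mix_sub (1 - u) p v q) as E.
    replace (1 - (1 - u)) with u in E by ring. fold c D in E.
    assert (u * (u * D - 2 * c) < 0) by (apply Rmult_pos_neg; nra).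
    lra. }
  assert (Heq : 1 - t = 1 - t / 2).
  { apply (mix_inj _ _ p v Hpv). now rewrite (Hhit t), (Hhit (t / 2)) by lra. }
  lra.
Qed.

Lemma in_diam_disk_of_dot_at_le0 (p q v : pt) : dot_at v p q <= 0 -> in_diam_disk p q v.
Proof.
  destruct p as [p1 p2], q as [q1 q2], v as [v1 v2].
  unfold in_diam_disk, Defs.dist, midpoint, dot_at; cbn [fst snd]; intros H.
  set (x := (v1 - (p1 + q1) / 2) ^ 2 + (v2 - (p2 + q2) / 2) ^ 2).
  set (y := (p1 - q1) ^ 2 + (p2 - q2) ^ 2).
  assert (Hx : 0 <= x)
    by (unfold x; pose proof (pow2_ge_0 (v1 - (p1 + q1) / 2));
        pose proof (pow2_ge_0 (v2 - (p2 + q2) / 2)); lra).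
  assert (Hxy : x <= y / 4) by (unfold x, y; nra).
  assert (Hy : 0 <= y)
    by (unfold y; pose proof (pow2_ge_0 (p1 - q1)); pose proof (pow2_ge_0 (p2 - q2)); lra).
  pose proof (sqrt_pos y).
  apply Rsqr_incr_0_var; [|lra].
  rewrite Rsqr_sqrt, Rsqr_div', Rsqr_sqrt by lra. unfold Rsqr. lra.
Qed.

Lemma last_eq_nth (l : list pt) (d : pt) : last l d = nth (length l - 1) l d.
Proof.
  induction l as [|a [|b l] IH]; [reflexivity | reflexivity |].
  change (last (a :: b :: l) d) with (last (b :: l) d). rewrite IH. cbn [length].
  now replace (S (length l) - 1)%nat with (length l) by lia.
Qed.

Lemma exists_departure (l : list pt) (p d : pt) :
  hd d l = p -> last l d <> p ->
  exists j, (S j < length l)%nat /\ nth j l d = p /\ nth (S j) l d <> p.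
Proof.
  induction l as [|a [|b l] IH]; cbn; intros Hhd Hlast; [congruence | congruence |].
  destruct (classic (b = p)) as [Hb|Hb].
  - destruct (IH Hb Hlast) as [j Hj]. exists (S j). cbn in *. intuition lia.
  - exists 0%nat. cbn. intuition lia.
Qed.

Lemma is_path_nth (E : pt -> pt -> Prop) (d : pt) (l : list pt) (j : nat) :
  is_path E l -> (S j < length l)%nat -> edge E (nth j l d) (nth (S j) l d).
Proof.
  revert j; induction l as [|a [|b l] IH]; cbn; intros j Hpath Hj; try lia.
  destruct Hpath as [Hab Hpath], j as [|j]; [exact Hab|].
  apply (IH j Hpath). cbn. lia.
Qed.

Lemma self_approaching_to_last (vs : list pt) (j : nat) (s : R) :
  self_approaching vs -> (S (S j) < length vs)%nat -> 0 <= s < 1 ->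
  let a := nth j vs (0, 0) in let b := nth (S j) vs (0, 0) in let c := last vs (0, 0) in
  a <> b -> b <> c -> mix s a b <> c ->
  Defs.dist b c < Defs.dist (mix s a b) c.
Proof.
  intros Hsa Hj Hs a b c Hab Hbc Hsc.
  specialize (Hsa (j, s) (j, 1) ((length vs - 2)%nat, 1)). cbv zeta in Hsa.
  assert (Hc : pos_pt vs ((length vs - 2)%nat, 1) = c).
  { unfold pos_pt; cbn [fst snd].
    replace (S (length vs - 2)) with (length vs - 1)%nat by lia.
    fold (mix 1 (nth (length vs - 2) vs (0, 0)) (nth (length vs - 1) vs (0, 0))).
    now rewrite mix1, <- last_eq_nth. }
  change (pos_pt vs (j, s)) with (mix s a b) in Hsa.
  change (pos_pt vs (j, 1)) with (mix 1 a b) in Hsa.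
  rewrite mix1, Hc in Hsa.
  assert (Hsb : mix s a b <> b).
  { intros E. rewrite <- (mix1 a b) in E at 2. apply (mix_inj _ _ _ _ Hab) in E. lra. }
  apply Hsa; unfold valid_pos, pos_lt; cbn [fst snd]; auto; try (split; [lia | lra]).
  - right; split; [reflexivity | lra].
  - left; lia.
Qed.

Lemma departure_in_diam_disk (vs : list pt) (j : nat) (p q : pt) :
  self_approaching vs -> last vs (0, 0) = q -> (S j < length vs)%nat ->
  nth j vs (0, 0) = p -> let v := nth (S j) vs (0, 0) in
  p <> v -> v <> q -> in_diam_disk p q v.
Proof.
  intros Hsa Hlast Hj Hp v Hpv Hvq.
  apply in_diam_disk_of_dot_at_le0, dot_at_le0_of_approaching; [exact Hpv|].
  intros s Hs Hsq.
  assert (Hjj : (S (S j) < length vs)%nat).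
  { destruct (Nat.eq_dec (S j) (length vs - 1)) as [E|E]; [|lia].
    exfalso; apply Hvq. unfold v. now rewrite E, <- last_eq_nth. }
  apply sqdist_lt_of_dist_lt. rewrite <- Hlast, <- Hp in *.
  now apply self_approaching_to_last.
Qed.

Theorem lemma2 (P : list pt) (S : pt -> pt -> Prop) :
  (forall a b, S a b -> In a P /\ In b P) ->
  increasing_chord P S ->
  forall p q, gabriel_edge P p q -> edge S p q.
Proof.
  intros HS HIC p q [Hp [Hq [Hpq Hgab]]].
  destruct (HIC p q Hp Hq) as [vs [_ [Hhd [Hlast [Hpath [Hsa _]]]]]].
  destruct (exists_departure vs p (0, 0) Hhd ltac:(congruence)) as [j [Hj [Hjp Hv]]].
  set (v := nth (Datatypes.S j) vs (0, 0)) in Hv.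
  assert (Hpv : edge S p v) by (rewrite <- Hjp; now apply is_path_nth).
  destruct (classic (v = q)) as [<-|Hvq]; [exact Hpv|].
  exfalso.
  assert (HvP : In v P) by (destruct Hpv as [H|H]; apply HS in H; tauto).
  apply (Hgab v HvP Hv Hvq).
  apply (departure_in_diam_disk vs j); auto.
Qed.
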